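(* Let $S$ be a nonempty set of graphs on $\Pi$, $A$ the closed-above model generated by $S$, and $r>0$. Then for every integer $i$ with $1\le i<\mathrm{eqdom}(S^r)$, $(i+(n-\mathrm{cov}_i(S^r)))$-set agreement is solvable in $r$ rounds on $A$.
   Context: Fix $\Pi=\{p_1,\dots,p_n\}$. A graph is a directed graph on $\Pi$ containing all self-loops; $Out_G(p)=\{q:(p,q)\in E(G)\}$, $In_G(p)=\{q:(q,p)\in E(G)\}$, $Out_G(P)=\bigcup_{p\in P}Out_G(p)$. Computation proceeds in failure-free, communication-closed rounds: in round $r$ a graph $G_r$ is chosen and each $p$ receives the round-$r$ messages of the processes in $In_{G_r}(p)$. $\uparrow G=\{H:E(H)\supseteq E(G)\}$; the closed-above model generated by $S$ allows exactly the executions whose round graphs each lie in $\bigcup_{G\in S}\uparrow G$. In $k$-set agreement each process starts with an input from a totally ordered set $V_{in}$ and must decide a value so that every decided value is some process's input and at most $k$ distinct values are decided; it is solvable in $r$ rounds if some algorithm guarantees this, with all processes deciding after $r$ rounds, in every allowed execution and input assignment. $\mathrm{eqdom}(G)=\min\{i\in[1,n]:\forall P\subseteq\Pi,\ |P|=i\Rightarrow Out_G(P)=\Pi\}$, $\mathrm{eqdom}(S)=\max_{G\in S}\mathrm{eqdom}(G)$, $\mathrm{cov}_i(G)=\min_{P\subseteq\Pi,|P|=i}|Out_G(P)|$, $\mathrm{cov}_i(S)=\min_{G\in S}\mathrm{cov}_i(G)$. The graph path product $G\otimes H$ has edge set $\{(u,v):\exists w,\ (u,w)\in E(G)\wedge(w,v)\in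 E(H)\}$, and $S^r=\{G_1\otimes\cdots\otimes G_r: G_1,\dots,G_r\in S\}$. *)

From HB Require Import structures.
From mathcomp Require Import all_boot all_order.
Set Implicit Arguments. Unset Strict Implicit. Unset Printing Implicit Defensive.

Definition graph (n : nat) := {set 'I_n * 'I_n}.

Definition is_graph n (G : graph n) : Prop := forall p : 'I_n, (p, p) \in G.

Definition Out n (G : graph n) (p : 'I_n) : {set 'I_n} := [set q | (p, q) \in G].
Definition OutS n (G : graph n) (P : {set 'I_n}) : {set 'I_n} :=
  \bigcup_(p in P) Out G p.

(* eqdom(G) = min { i in [1,n] | forall P, |P| = i -> Out_G(P) = Pi }
   (the default n is never used for graphs, since i = n always works). *)
Definition eqdom_pred n (G : graph n) (i : nat) : bool :=
  [forall P : {set 'I_n}, (#|P| == i) ==> (OutS G P == setT)].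
Definition eqdom n (G : graph n) : nat :=
  head n [seq i <- iota 1 n | eqdom_pred G i].
Definition eqdom_set n (S : {set graph n}) : nat := \max_(G in S) eqdom G.

(* cov_i(G) = min_{|P| = i} |Out_G(P)|;  cov_i(S) = min_{G in S} cov_i(G).
   (n is a neutral default: all values are <= n.) *)
Definition cov n (i : nat) (G : graph n) : nat :=
  \big[minn/n]_(P : {set 'I_n} | #|P| == i) #|OutS G P|.
Definition cov_set n (i : nat) (S : {set graph n}) : nat :=
  \big[minn/n]_(G in S) cov i G.

Definition gprod n (G H : graph n) : graph n :=
  [set e | [exists w : 'I_n, ((e.1, w) \in G) && ((w, e.2) \in H)]].

Definition gid n : graph n := [set e | e.1 == e.2].

(* S^r = { G_1 (x) ... (x) G_r | G_j in S } (product is associative;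
   S^0 = {identity graph}, S^1 = S). *)
Fixpoint Spow n (S : {set graph n}) (r : nat) : {set graph n} :=
  match r with
  | 0 => [set gid n]
  | r'.+1 => [set gprod G H | G in Spow S r', H in S]
  end.

Definition closed_above n (S : {set graph n}) (H : graph n) : bool :=
  [exists G in S, G \subset H].

Record algorithm (V : Type) (n : nat) : Type := Algorithm {
  State : Type;
  Msg : Type;
  init : 'I_n -> V -> State;
  send : 'I_n -> State -> Msg;
  trans : 'I_n -> State -> ('I_n -> option Msg) -> State;
  decide : 'I_n -> State -> V
}.

(* state of each process after t rounds, round j+1 using graph gs j *)
Fixpoint state_at V n (A : algorithm V n) (inp : 'I_n -> V)
  (gs : nat -> graph n) (t : nat) : 'I_n -> State A :=
  match t with
  | 0 => fun p => @init _ _ A p (inp p)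
  | t'.+1 => let s := state_at A inp gs t' in
      fun p => @trans _ _ A p (s p)
        (fun q => if (q, p) \in gs t' then Some (@send _ _ A q (s q)) else None)
  end.

Definition decision V n (A : algorithm V n) inp gs r (p : 'I_n) : V :=
  @decide _ _ A p (state_at A inp gs r p).

Definition kset_solvable (d : Order.disp_t) (V : orderType d) (n : nat)
  (S : {set graph n}) (k r : nat) : Prop :=
  exists A : algorithm V n,
    forall (inp : 'I_n -> V) (gs : nat -> graph n),
      (forall t, t < r -> closed_above S (gs t)) ->
      (forall p, exists q, decision A inp gs r p = inp q) /\
      size (undup [seq decision A inp gs r p | p <- enum 'I_n]) <= k.

(* Every process repeatedly adopts the minimum value it hears of and finally
   decides it.  After r rounds the "heard-of" graph of the execution contains
   some G in S^r, so a process decides at most the input of each of its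
   in-neighbours in G.  Let t be the i-th smallest decided value.  At least i
   processes have inputs <= t (distinct decided values are distinct inputs);
   pick i of them as P.  Every process of Out_G(P) then decides a value <= t,
   so the values above t are decided by processes outside Out_G(P), of which
   there are at most n - cov_i(S^r). *)

From HB Require Import structures.
From mathcomp Require Import all_boot all_order.
Import Order.TTheory.

Set Implicit Arguments.
Unset Strict Implicit.
Unset Printing Implicit Defensive.

Section Thresholds.
Variables (d : Order.disp_t) (V : orderType d).

Lemma count_le_nth_lt_sorted (x0 : V) (s : seq V) k :
  sorted <%O s -> k < size s -> count (<= nth x0 s k)%O s = k.+1.
Proof.
elim: s k => [|x s IH] [|k] //=; rewrite lt_path_sortedE => /andP [xs ss] hk.
- rewrite lexx; congr _.+1; apply/eqP; rewrite -leqn0 leqNgt -has_count.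
  by apply/hasPn => y /(allP xs); rewrite ltNge.
- have xy : (x <= nth x0 s k)%O by apply/ltW/(allP xs)/mem_nth.
  by rewrite xy IH.
Qed.

Lemma exists_count_le (s : seq V) i : uniq s -> 0 < i <= size s ->
  exists t : V, count (<= t)%O s = i.
Proof.
case: i => // k us /= hk; case: s us hk => [|x0 s'] // us hk.
set s := x0 :: s'; exists (nth x0 (sort <=%O s) k).
rewrite -(permP (permEl (perm_sort <=%O s))) count_le_nth_lt_sorted ?size_sort //.
by rewrite sort_lt_sorted.
Qed.

End Thresholds.

Lemma uniq_size_le_card (T : finType) (U : eqType) (f : T -> U) (A : {pred T})
  (s : seq U) : uniq s -> {subset s <= image f A} -> size s <= #|A|.
Proof. by move=> us sub; rewrite -(size_image f A); apply: uniq_leq_size. Qed.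

Section Graphs.
Variable n : nat.

Lemma gprod_subset (G G' H H' : graph n) : G \subset H -> G' \subset H' ->
  gprod G G' \subset gprod H H'.
Proof.
move=> /subsetP sGH /subsetP sGH'; apply/subsetP => e; rewrite !inE.
case/existsP => w /andP [eG eG']; apply/existsP; exists w.
by rewrite sGH // sGH'.
Qed.

(* [heard_of gs t] contains (q, p) iff information from q can reach p within
   the first t rounds of the execution [gs]. *)
Fixpoint heard_of (gs : nat -> graph n) (t : nat) : graph n :=
  if t is t'.+1 then gprod (heard_of gs t') (gs t') else gid n.

Lemma Spow_subset_heard_of (S : {set graph n}) gs r :
  (forall t, t < r -> closed_above S (gs t)) ->
  exists2 G, G \in Spow S r & G \subset heard_of gs r.
Proof.
elim: r => [|r IH] hgs; first by exists (gid n); rewrite ?inE.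
have [G GS sG] := IH (fun t ht => hgs t (ltnW ht)).
have /existsP [H /andP [HS sH]] := hgs r (ltnSn r).
by exists (gprod G H); [apply: imset2_f | apply: gprod_subset].
Qed.

Lemma cov_le (G : graph n) (P : {set 'I_n}) :
  cov #|P| G <= #|OutS G P|.
Proof. by rewrite /cov -minEnat; apply: (@bigmin_le_cond _ nat). Qed.

Lemma cov_set_le (S : {set graph n}) i G : G \in S -> cov_set i S <= cov i G.
Proof. by rewrite /cov_set -minEnat => GS; apply: (@bigmin_le_cond _ nat). Qed.

End Graphs.

Section MinAlgorithm.
Variables (n : nat) (d : Order.disp_t) (V : orderType d).

Definition min_step (f : 'I_n -> option V) (q : 'I_n) (acc : V) : V :=
  if f q is Some m then Order.min m acc else acc.

Definition min_received (s : V) (f : 'I_n -> option V) : V :=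
  foldr (min_step f) s (enum 'I_n).

Lemma min_received_le s f q m : f q = Some m -> (min_received s f <= m)%O.
Proof.
rewrite /min_received; have : q \in enum 'I_n by rewrite mem_enum.
elim: (enum _) => //= q' l IH; rewrite in_cons /min_step.
case/orP => [/eqP <- -> | ql fq]; first by rewrite ge_min lexx.
case: (f q') => [m'|]; last exact: IH.
by rewrite ge_min IH ?orbT.
Qed.

Lemma min_received_cases s f :
  min_received s f = s \/ exists q, f q = Some (min_received s f).
Proof.
rewrite /min_received; elim: (enum _) => [|q l IH] /=; first by left.
rewrite /min_step; case fq: (f q) => [m|] //.
by rewrite minEle; case: ifP => _ //; right; exists q.
Qed.

Definition min_alg : algorithm V n :=
  @Algorithm V n V V (fun _ v => v) (fun _ s => s)
    (fun _ => min_received) (fun _ s => s).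

Lemma min_alg_state_valid (inp : 'I_n -> V) gs t p :
  exists q, state_at min_alg inp gs t p = inp q.
Proof.
elim: t p => [|t IH] p /=; first by exists p.
case: (min_received_cases (state_at min_alg inp gs t p)
  (fun q => if (q, p) \in gs t then Some (state_at min_alg inp gs t q) else None)).
  by move=> ->; apply: IH.
by case=> q; case: ifP => // _ [<-]; apply: IH.
Qed.

Lemma min_alg_state_le (inp : 'I_n -> V) (gs : nat -> graph n) t p q :
  (q, p) \in heard_of gs t -> (state_at min_alg inp gs t p <= inp q)%O.
Proof.
elim: t p q => [|t IH] p q /=; first by rewrite inE /= => /eqP ->.
rewrite inE /= => /existsP [w /andP [qw wp]].
apply: le_trans (IH _ _ qw); apply: (@min_received_le _ _ w).
by rewrite wp.
Qed.

Lemma min_alg_decisions (G : graph n) (inp : 'I_n -> V) gs r i :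
  G \subset heard_of gs r -> 0 < i ->
  size (undup [seq decision min_alg inp gs r p | p <- enum 'I_n])
    <= i + (n - cov i G).
Proof.
set dec := decision min_alg inp gs r; set D := undup _ => sG i_gt0.
have [le_D_i | lt_i_D] := leqP (size D) i.
  exact: leq_trans le_D_i (leq_addr _ _).
have [t count_D] : exists t, count (<= t)%O D = i.
  by apply: exists_count_le; rewrite ?undup_uniq // i_gt0 ltnW.
have : i <= #|[pred q | inp q <= t]%O|.
  rewrite -count_D -size_filter; apply: (@uniq_size_le_card _ _ inp).
    by rewrite filter_uniq ?undup_uniq.
  move=> x; rewrite mem_filter mem_undup => /andP [xt /mapP [p _ xp]].
  have [q decq] := min_alg_state_valid inp gs r p.
  rewrite xp /dec /decision /= decq in xt *.
  by apply/imageP; exists q.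
case/card_geqP => sP [uP size_sP sP_low]; set P := [set q in sP].
have card_P : #|P| = i by rewrite cardsE (card_uniqP uP) size_sP.
have high_out : [set p | t < dec p]%O \subset ~: OutS G P.
  apply/subsetP => p; rewrite !inE; apply: contraL => /bigcupP [q qP].
  rewrite inE -leNgt => /(subsetP sG) /(min_alg_state_le inp) /le_trans; apply.
  by move: qP; rewrite inE => /sP_low.
rewrite -(count_predC (<= t)%O D) count_D leq_add2l.
apply: (@leq_trans #|[set p | t < dec p]%O|).
  rewrite -size_filter; apply: (@uniq_size_le_card _ _ dec).
    by rewrite filter_uniq ?undup_uniq.
  move=> x; rewrite mem_filter /= -ltNge mem_undup => /andP [tx /mapP [p _ xp]].
  by apply/imageP; exists p; rewrite // inE -xp.
apply: leq_trans (subset_leq_card high_out) _.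
rewrite cardsCs setCK card_ord leq_sub2l //.
by rewrite -card_P cov_le.
Qed.

End MinAlgorithm.

Theorem theorem8 (n : nat) (d : Order.disp_t) (V : orderType d)
  (S : {set graph n}) (hS : forall G, G \in S -> is_graph G) (hne : S != set0)
  (r : nat) (hr : 0 < r) (i : nat) (hi1 : 1 <= i)
  (hi2 : i < eqdom_set (Spow S r)) :
  kset_solvable V S (i + (n - cov_set i (Spow S r))) r.
Proof.
exists (min_alg n V) => inp gs hgs; split.
  by move=> p; apply: min_alg_state_valid.
have [G GS sG] := Spow_subset_heard_of hgs.
apply: leq_trans (min_alg_decisions inp sG hi1) _.
by rewrite leq_add2l leq_sub2l // cov_set_le.
Qed.
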